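(* Let $A$ be an $n\times n$ Hermitian matrix ($n\ge2$) with eigenvalues $\lambda_1\ge\dots\ge\lambda_n$ and corresponding orthonormal eigenvectors $v_1,\dots,v_n$; write $v_{i,k}$ for the $k$-th component of $v_i$. Fix $k\in\{1,\dots,n\}$ and let $\mu_{k,1}\ge\dots\ge\mu_{k,n-1}$ be the eigenvalues of $A_k$. Set $U^k_\ell:=\sum_{i=\ell}^n|v_{i,k}|^2$ and $L^k_{r+1}:=\sum_{i=1}^{r+1}|v_{i,k}|^2$. Then for all $1\le\ell\le r\le n-1$ with $U^k_\ell\ne0$ and $L^k_{r+1}\ne0$, $$\sum_{j=\ell}^r\lambda_{j+1}+\sum_{j=\ell}^r\frac{|v_{j+1,k}|^2}{L^k_{r+1}}(\lambda_\ell-\lambda_{j+1})\le\sum_{j=\ell}^r\mu_{k,j}\le\sum_{j=\ell}^r\lambda_j-\sum_{j=\ell}^r\frac{|v_{j,k}|^2}{U^k_\ell}(\lambda_j-\lambda_{r+1}).$$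
   Context: For an $n\times n$ matrix $A$ and $k\in\{1,\dots,n\}$, $A_k$ denotes the $(n-1)\times(n-1)$ principal submatrix obtained by deleting the $k$-th row and $k$-th column of $A$. *)

From mathcomp Require Import all_boot all_order all_algebra.
Set Implicit Arguments. Unset Strict Implicit. Unset Printing Implicit Defensive.
Import Order.TTheory GRing.Theory Num.Theory.
Local Open Scope ring_scope.

Definition principal_del (R : Type) (n : nat) (k : 'I_n) (A : 'M[R]_n)
  : 'M[R]_n.-1 := row' k (col' k A).

Definition hermitian_mx (C : numClosedFieldType) (n : nat) (A : 'M[C]_n) : Prop :=
  forall i j : 'I_n, A j i = (A i j)^*.

From mathcomp Require Import all_boot all_order all_algebra perm zify ring.
Set Implicit Arguments. Unset Strict Implicit. Unset Printing Implicit Defensive.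
Import Order.TTheory GRing.Theory Num.Theory.
Local Open Scope ring_scope.
Local Open Scope sesquilinear_scope.

(* A trace argument in the style of Ky Fan.  For the lower bound, take an
   (r+1-l)-dimensional subspace S of the span of the eigenvectors of A_k for
   mu_l, ..., mu_(n-1) (all orthogonal to e_k) that is also orthogonal to
   v_(r+2), ..., v_n.  The trace of A compressed to S is  sum_j mu_j w_j  with
   0 <= w_j <= 1, sum_j w_j = r+1-l, and also  sum_i lam_i d_i  with
   d_i = |P_S v_i|^2 supported on i <= r+1 and summing to r+1-l.  Projecting e_k
   onto span(v_1, ..., v_(r+1)) and normalising gives a unit vector orthogonal
   to S, whence d_i <= 1 - |v_(i,k)|^2 / L.  Bounding both linear forms under
   these constraints gives the inequality.  The upper bound is symmetric, using
   the eigenvectors of A_k for mu_1, ..., mu_r and excluding v_1, ..., v_(l-1). *)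

Lemma char_poly_conj (R : comUnitRingType) n (P D : 'M[R]_n) : P \in unitmx ->
  char_poly (invmx P *m D *m P) = char_poly D.
Proof.
move=> P_unit; rewrite /char_poly /char_poly_mx.
have -> : 'X%:M - map_mx polyC (invmx P *m D *m P) =
    map_mx polyC (invmx P) *m ('X%:M - map_mx polyC D) *m map_mx polyC P.
  rewrite mulmxBr mulmxBl scalar_mxC !map_mxM; congr (_ - _).
  by rewrite -mulmxA -map_mxM mulVmx // map_mx1 mulmx1.
rewrite !det_mulmx !det_map_mx mulrC mulrA -rmorphM -det_mulmx mulmxV //.
by rewrite det1 mul1r.
Qed.

Definition capped_weights (R : numDomainType) (I : finType) (cap w : I -> R)
    (m : nat) : Prop :=
  (forall i, 0 <= w i <= cap i) /\ \sum_i w i = m%:R.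

Section CappedWeights.
Variables (R : numDomainType) (I : finType).

(* Since sum_i x i * w i = sum_i (x i - c) * w i + c * m, it suffices to
   compare termwise: on P the factor x i - c is nonpositive and w i <= cap i. *)
Lemma capped_weights_sum_ge (x cap w : I -> R) (P : pred I) c m :
  capped_weights cap w m -> #|P| = m ->
  (forall i, P i -> x i <= c) -> (forall i, ~~ P i -> w i != 0 -> c <= x i) ->
  \sum_(i | P i) ((x i - c) * cap i + c) <= \sum_i x i * w i.
Proof.
move=> [w_cap w_sum] card_P xP xNP.
have -> : \sum_i x i * w i = \sum_i (x i - c) * w i + c * m%:R.
  by rewrite -w_sum mulr_sumr -big_split /=; apply: eq_bigr => i _; rewrite mulrBl subrK.
rewrite big_split /= sumr_const card_P mulr_natr lerD2r [leRHS](bigID P) /=.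
rewrite -[leLHS]addr0 lerD ?ler_sum // => [i Pi | ].
  have /andP [_ w_le] := w_cap i.
  by rewrite ler_wnM2l // subr_le0 xP.
rewrite sumr_ge0 // => i NPi; have [-> | w_neq0] := eqVneq (w i) 0; first by rewrite mulr0.
by have /andP [w_ge0 _] := w_cap i; rewrite mulr_ge0 // subr_ge0 xNP.
Qed.

Lemma capped_weights_sum_le (x cap w : I -> R) (P : pred I) c m :
  capped_weights cap w m -> #|P| = m ->
  (forall i, P i -> c <= x i) -> (forall i, ~~ P i -> w i != 0 -> x i <= c) ->
  \sum_i x i * w i <= \sum_(i | P i) ((x i - c) * cap i + c).
Proof.
move=> w_capped card_P xP xNP.
rewrite -lerN2 -!sumrN.
have -> : \sum_i - (x i * w i) = \sum_i - x i * w i.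
  by apply: eq_bigr => i _; rewrite mulNr.
have -> : \sum_(i | P i) - ((x i - c) * cap i + c) =
    \sum_(i | P i) ((- x i - - c) * cap i + - c).
  by apply: eq_bigr => i _; ring.
apply: capped_weights_sum_ge w_capped card_P _ _ => i.
  by move=> /xP; rewrite lerN2.
by move=> /xNP xNPi /xNPi; rewrite lerN2.
Qed.

Lemma capped_weights_eq0 (ex : pred I) (q w : I -> R) m :
  capped_weights (fun i => if ex i then 0 else q i) w m -> forall i, ex i -> w i = 0.
Proof.
by move=> [w_cap _] i ex_i; have := w_cap i; rewrite ex_i -eq_le => /eqP.
Qed.
End CappedWeights.

Lemma big_nat_ord_window (R : nmodType) (F : nat -> R) a b s N :
  (s <= a)%N -> (b <= N + s)%N ->
  \sum_(a <= i < b) F i = \sum_(i < N | (a <= i + s < b)%N) F (i + s)%N.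
Proof.
move=> le_sa le_bNs.
rewrite (big_nat_widen _ _ _ _ _ le_bNs) (big_nat_widenl _ _ _ _ _ le_sa).
rewrite -{1}[s]add0n big_addn addnK big_mkord.
by apply: eq_bigl => i /=; rewrite andbC.
Qed.

Lemma card_ord_window N s a b : (s <= a)%N -> (b <= N + s)%N ->
  #|[pred i : 'I_N | (a <= i + s < b)%N]| = (b - a)%N.
Proof.
move=> le_sa le_bNs; rewrite -sum1_card -(big_nat_ord_window (fun=> 1%N) le_sa le_bNs).
by rewrite sum_nat_const_nat muln1.
Qed.

Lemma sorted_le (R : numDomainType) (x : nat -> R) p q :
  (forall i, (p <= i < q)%N -> x i.+1 <= x i) ->
  forall i j, (p <= i <= j)%N -> (j <= q)%N -> x j <= x i.
Proof.
move=> x_step i j /andP [le_pi]; elim: j => [|j IHj]; first by rewrite leqn0 => /eqP ->.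
rewrite leq_eqVlt => /orP [/eqP <- // | lt_ij] le_jq.
by apply: le_trans (x_step j _) (IHj lt_ij _); lia.
Qed.

Section UnitaryMatrices.
Variable C : numClosedFieldType.

Lemma trmxC_mul m n p (X : 'M[C]_(m, n)) (Y : 'M[C]_(n, p)) :
  (X *m Y)^t* = Y^t* *m X^t*.
Proof. by rewrite trmx_mul map_mxM. Qed.

Lemma mxtrace_diag_conj m N (X : 'M[C]_(m, N)) (d : 'rV[C]_N) :
  \tr (X *m diag_mx d *m X^t*) = \sum_j d 0 j * \sum_s `|X s j| ^+ 2.
Proof.
rewrite /mxtrace; under eq_bigr => s _ do rewrite mxE.
rewrite exchange_big /=; apply: eq_bigr => j _; rewrite mulr_sumr.
by apply: eq_bigr => s _; rewrite mul_mx_diag !mxE normCK mulrA [X s j * _]mulrC.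
Qed.

Lemma unitarymx_sum_col_norm m N (X : 'M[C]_(m, N)) :
  X \is unitarymx -> \sum_j \sum_s `|X s j| ^+ 2 = m%:R.
Proof.
move=> /unitarymxP XX; rewrite exchange_big /= -[m in RHS]card_ord -sumr_const.
apply: eq_bigr => s _; move/matrixP: XX => /(_ s s); rewrite !mxE eqxx mulr1n => <-.
by apply: eq_bigr => j _; rewrite !mxE normCK.
Qed.

(* X^* X is an orthogonal projection P, so P_jj = sum_t |P_jt|^2 >= P_jj^2. *)
Lemma unitarymx_col_norm_le1 m N (X : 'M[C]_(m, N)) j :
  X \is unitarymx -> \sum_s `|X s j| ^+ 2 <= 1.
Proof.
move=> /unitarymxP XX; set P := X^t* *m X.
have PP : P *m P = P by rewrite /P mulmxA -[X^t* *m X *m X^t*]mulmxA XX mulmx1.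
have Pjj : P j j = \sum_s `|X s j| ^+ 2.
  by rewrite /P !mxE; apply: eq_bigr => s _; rewrite !mxE normCK mulrC.
have P_ge0 : 0 <= P j j by rewrite Pjj sumr_ge0 // => s _; exact: exprn_ge0.
have P_row : P j j = \sum_t `|P j t| ^+ 2.
  rewrite -{1}PP mxE; apply: eq_bigr => t _.
  rewrite normCK /P !mxE rmorph_sum; congr (_ * _); apply: eq_bigr => s _.
  by rewrite !mxE rmorphM /= conjCK mulrC.
have P2_le : P j j ^+ 2 <= P j j.
  rewrite [leRHS]P_row [leRHS](bigD1 j) //= -[in leLHS](ger0_norm P_ge0).
  by rewrite lerDl sumr_ge0 // => s _; exact: exprn_ge0.
rewrite -Pjj; have [->|nz] := eqVneq (P j j) 0; first exact: ler01.
have P_gt0 : 0 < P j j by rewrite lt_def nz.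
by rewrite -(ler_pM2l P_gt0) mulr1 -expr2.
Qed.

Lemma rowsub_conj_mxE a N n (t : 'I_a -> 'I_N) (X : 'M[C]_(N, n)) (B : 'M[C]_n) i j :
  (rowsub t X *m B *m (rowsub t X)^t*) i j = (X *m B *m X^t*) (t i) (t j).
Proof.
rewrite !mxE; apply: eq_bigr => q _; rewrite !mxE; congr (_ * _).
by apply: eq_bigr => p _; rewrite !mxE.
Qed.

Lemma rowsub_unitarymx a N n (t : 'I_a -> 'I_N) (X : 'M[C]_(N, n)) :
  injective t -> X \is unitarymx -> rowsub t X \is unitarymx.
Proof.
move=> t_inj /unitarymxP XX; apply/unitarymxP/matrixP => i j.
have := rowsub_conj_mxE t X 1%:M i j; rewrite !mulmx1 => ->.
by rewrite XX !mxE (inj_eq t_inj).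
Qed.

Lemma rowsub_conj_diag a N n (t : 'I_a -> 'I_N) (X : 'M[C]_(N, n)) (B : 'M[C]_n)
    (e : 'rV[C]_N) :
  injective t -> X *m B *m X^t* = diag_mx e ->
  rowsub t X *m B *m (rowsub t X)^t* = diag_mx (\row_i e 0 (t i)).
Proof.
move=> t_inj XBX; apply/matrixP => i j.
by rewrite rowsub_conj_mxE XBX !mxE (inj_eq t_inj).
Qed.

Lemma unitarymx_kermx a b m (M : 'M[C]_(a, b)) : (b + m <= a)%N ->
  exists2 c : 'M[C]_(m, a), c \is unitarymx & c *m M = 0.
Proof.
move=> le_bma; set S := schmidt (row_base (kermx M)).
have le_m_rk : (m <= \rank (kermx M))%N.
  by rewrite mxrank_ker; have := rank_leq_col M; lia.
have S_ker : (S <= kermx M)%MS.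
  by rewrite (eqmx_schmidt_free (row_base_free _)) eq_row_base.
exists (rowsub (widen_ord le_m_rk) S).
  apply: rowsub_unitarymx; last exact/schmidt_unitarymx/rank_leq_col.
  by move=> i j /(congr1 val) /= /val_inj.
by rewrite mul_rowsub_mx (sub_kermxP S_ker); apply/matrixP => i j; rewrite !mxE.
Qed.

(* Appending a unit row orthogonal to the rows of G keeps the rows orthonormal. *)
Lemma unitarymx_col_norm_add m N (G : 'M[C]_(m, N)) (u : 'rV[C]_N) j :
  G \is unitarymx -> u \is unitarymx -> G *m u^t* = 0 ->
  \sum_s `|G s j| ^+ 2 + `|u 0 j| ^+ 2 <= 1.
Proof.
move=> /unitarymxP GG /unitarymxP uu Gu.
have uG : u *m G^t* = 0.
  move/(congr1 (fun X => X^t*)): Gu; rewrite trmxC_mul trmxCK => ->.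
  by rewrite trmx0 map_mx0.
have Fu : col_mx G u \is unitarymx.
  apply/unitarymxP; rewrite tr_col_mx map_row_mx mul_col_row.
  by rewrite GG Gu uG uu -scalar_mx_block.
have := unitarymx_col_norm_le1 j Fu; rewrite big_split_ord /= big_ord1.
by under eq_bigr => s _ do rewrite col_mxEu; rewrite col_mxEd.
Qed.

(* The normalised restriction of x to the complement of ex is such a unit row. *)
Lemma unitarymx_col_norm_orth m N (G : 'M[C]_(m, N)) (x : 'I_N -> C)
    (ex : pred 'I_N) i :
  G \is unitarymx -> (forall s j, ex j -> G s j = 0) ->
  (forall s, \sum_j G s j * (x j)^* = 0) ->
  \sum_(j | ~~ ex j) `|x j| ^+ 2 != 0 -> ~~ ex i ->
  \sum_s `|G s i| ^+ 2 + `|x i| ^+ 2 / \sum_(j | ~~ ex j) `|x j| ^+ 2 <= 1.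
Proof.
move=> G_unitary Gex Gx U_neq0 exNi; set U := \sum_(j | _) _ in U_neq0 *.
have sqrt_ge0 : 0 <= sqrtC U^-1.
  by rewrite sqrtC_ge0 invr_ge0 sumr_ge0 // => j _; exact: exprn_ge0.
pose u : 'rV_N := \row_j ((~~ ex j)%:R * x j * sqrtC U^-1).
have u_norm j : `|u 0 j| ^+ 2 = (~~ ex j)%:R * (`|x j| ^+ 2 / U).
  rewrite mxE !normrM !exprMn normr_nat (ger0_norm sqrt_ge0) sqrtCK.
  by case: (ex j); rewrite ?expr0n ?expr1n ?mul0r ?mul1r.
have Gu : G *m u^t* = 0.
  apply/matrixP => s z; rewrite {z}(ord1 z) !mxE.
  apply: (@eq_trans _ _ ((\sum_j G s j * (x j)^*) * sqrtC U^-1)).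
    rewrite mulr_suml; apply: eq_bigr => j _.
    rewrite !mxE !rmorphM /= (geC0_conj sqrt_ge0).
    case: (boolP (ex j)) => [/Gex -> | _]; first by rewrite !mul0r.
    by rewrite conjC_nat mul1r mulrA.
  by rewrite Gx mul0r.
have u_unitary : u \is unitarymx.
  apply/unitarymxP/matrixP => z z'; rewrite !ord1 !mxE eqxx mulr1n.
  under eq_bigr => j _ do rewrite [(u^t*) _ _]mxE [u^T _ _]mxE -normCK u_norm.
  rewrite -[RHS](mulfV U_neq0) mulr_suml [RHS]big_mkcond /=.
  by apply: eq_bigr => j _; case: (ex j); rewrite /= ?mul0r ?mul1r.
by have := unitarymx_col_norm_add i G_unitary u_unitary Gu; rewrite u_norm exNi mul1r.
Qed.

(* The rows of Z := c Y span an m-dimensional subspace of the row space of Y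
   orthogonal to the eigenvectors of A indexed by ex; w and d are the squared
   column norms of c and of Z V, and both sides of the first conclusion equal
   the trace of Z A Z^*. *)
Lemma unitary_trace_weights n a b m (A V : 'M[C]_n) (lo : 'rV[C]_n) (k : 'I_n)
    (Y : 'M[C]_(a, n)) (e : 'rV[C]_a) (ex : pred 'I_n) (f : 'I_b -> 'I_n) :
  V \is unitarymx -> A = V *m diag_mx lo *m V^t* ->
  Y \is unitarymx -> Y *m A *m Y^t* = diag_mx e -> (forall j, Y j k = 0) ->
  (forall i, ex i -> exists t, i = f t) -> (b + m <= a)%N ->
  let U := \sum_(i | ~~ ex i) `|V k i| ^+ 2 in U != 0 ->
  exists w d, \sum_j e 0 j * w j = \sum_i lo 0 i * d i /\
    capped_weights (fun=> 1) w m /\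
    capped_weights (fun i => if ex i then 0 else 1 - `|V k i| ^+ 2 / U) d m.
Proof.
move=> V_unitary AV Y_unitary YAY Yk exf le_bma U U_neq0.
have [c c_unitary cYV] := unitarymx_kermx (colsub f (Y *m V)) le_bma.
pose Z := c *m Y; pose G := Z *m V.
have Z_unitary : Z \is unitarymx by apply: mul_unitarymx.
have G_unitary : G \is unitarymx by apply: mul_unitarymx.
have Gex s i : ex i -> G s i = 0.
  move=> /exf [t ->]; move/matrixP: cYV => /(_ s t).
  by rewrite mulmx_colsub mulmxA !mxE.
have Gk s : \sum_i G s i * (V k i)^* = 0.
  transitivity (Z s k); last by rewrite mxE big1 // => j _; rewrite Yk mulr0.
  by rewrite -[Z](mulmxtVK _ V_unitary) !mxE; apply: eq_bigr => i _; rewrite !mxE.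
exists (fun j => \sum_s `|c s j| ^+ 2), (fun i => \sum_s `|G s i| ^+ 2).
split; [|split; split].
- rewrite -(mxtrace_diag_conj c e) -(mxtrace_diag_conj G lo) -YAY AV /G /Z.
  by rewrite !trmxC_mul !mulmxA.
- move=> j; rewrite sumr_ge0 ?unitarymx_col_norm_le1 // => s _; exact: exprn_ge0.
- exact: unitarymx_sum_col_norm.
- move=> i; case: ifP => [/(Gex _) G0 | /negbT exNi].
    by rewrite big1 ?lexx // => s _; rewrite G0 normr0 expr0n.
  rewrite sumr_ge0 => [|s _]; last exact: exprn_ge0.
  by rewrite lerBrDr (unitarymx_col_norm_orth (i := i) G_unitary Gex Gk).
- exact: unitarymx_sum_col_norm.
Qed.

(* The spectral theorem gives some unitary diagonalisation; the eigenvalues on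
   its diagonal are a permutation of the prescribed roots of the characteristic
   polynomial, and permuting the rows of the unitary matrix reorders them. *)
Lemma hermitian_unitary_diag n (B : 'M[C]_n) (e : 'rV[C]_n) : B^t* = B ->
  char_poly B = \prod_j ('X - (e 0 j)%:P) ->
  exists2 Q : 'M[C]_n, Q \is unitarymx & Q *m B *m Q^t* = diag_mx e.
Proof.
move=> B_herm B_char.
have /orthomx_spectralP B_spectral : B \is normalmx by apply/normalmxP; rewrite B_herm.
set P := spectralmx B in B_spectral; set d := spectral_diag B in B_spectral.
have P_unitary : P \is unitarymx by exact: spectral_unitarymx.
have PBP : P *m B *m P^t* = diag_mx d.
  by rewrite {1}B_spectral invmx_unitary // !mulmxA mulmxtVK // (unitarymxP P_unitary) mul1mx.
have d_char : char_poly B = \prod_i ('X - (d 0 i)%:P).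
  rewrite B_spectral char_poly_conj ?unitarymx_unit // char_poly_trig ?diag_mx_is_trig //.
  by apply: eq_bigr => i _; rewrite mxE eqxx mulr1n.
have /tuple_permP [s es] : perm_eq [tuple e 0 j | j < n] [tuple d 0 j | j < n].
  by apply: prod_XsubC_eq; rewrite !big_map -d_char B_char.
have e_perm j : e 0 j = d 0 (s j).
  by have := congr1 (fun z => tnth z j) (val_inj es); rewrite !tnth_mktuple.
exists (rowsub s P); first exact: rowsub_unitarymx perm_inj P_unitary.
rewrite (rowsub_conj_diag perm_inj PBP); congr diag_mx; apply/rowP => j.
by rewrite !mxE e_perm.
Qed.

Lemma principal_del_unitary_diag n (k : 'I_n) (A : 'M[C]_n) (e : 'rV[C]_n.-1) :
  hermitian_mx A -> char_poly (principal_del k A) = \prod_j ('X - (e 0 j)%:P) ->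
  exists W : 'M[C]_(n.-1, n),
    [/\ W \is unitarymx, W *m A *m W^t* = diag_mx e & forall j, W j k = 0].
Proof.
move=> A_herm A_char; pose E : 'M[C]_(n.-1, n) := rowsub (lift k) 1%:M.
have E_unitary : E \is unitarymx.
  apply: rowsub_unitarymx; first exact: lift_inj.
  by apply/unitarymxP; rewrite trmx1 map_mx1 mulmx1.
have EAE : E *m A *m E^t* = principal_del k A.
  apply/matrixP => i j; rewrite rowsub_conj_mxE trmx1 map_mx1 mulmx1 mul1mx.
  by rewrite !mxE.
have [Q Q_unitary QAQ] : exists2 Q : 'M[C]_n.-1, Q \is unitarymx &
    Q *m principal_del k A *m Q^t* = diag_mx e.
  apply: hermitian_unitary_diag A_char; apply/matrixP => i j.
  by rewrite !mxE A_herm conjCK.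
exists (Q *m E); split; first exact: mul_unitarymx.
  by rewrite trmxC_mul -QAQ -EAE !mulmxA.
by move=> j; rewrite mxE big1 // => i _; rewrite !mxE eq_sym (negPf (neq_lift k i)) mulr0.
Qed.
End UnitaryMatrices.

Section Interlacing.
Variables (C : numClosedFieldType) (n : nat) (A : 'M[C]_n) (lam mu : nat -> C).
Variables (v : nat -> 'cV[C]_n) (k : 'I_n) (W : 'M[C]_(n.-1, n)).
Let V : 'M[C]_n := \matrix_(p, i) v i.+1 p 0.
Hypothesis V_unitary : V \is unitarymx.
Hypothesis A_spectral : A = V *m diag_mx (\row_i lam i.+1) *m V^t*.
Hypothesis W_unitary : W \is unitarymx.
Hypothesis W_diag : W *m A *m W^t* = diag_mx (\row_j mu j.+1).
Hypothesis W_k : forall j, W j k = 0.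
Hypothesis lam_sorted : forall i j, (1 <= i <= j)%N -> (j <= n)%N -> lam j <= lam i.
Hypothesis mu_sorted : forall i j, (1 <= i <= j)%N -> (j <= n.-1)%N -> mu j <= mu i.

Lemma interlacing_weights a b m (tau : 'I_a -> 'I_n.-1) (ex : pred 'I_n)
    (f : 'I_b -> 'I_n) :
  injective tau -> (forall i, ex i -> exists t, i = f t) -> (b + m <= a)%N ->
  let U := \sum_(i | ~~ ex i) `|v i.+1 k 0| ^+ 2 in U != 0 ->
  exists w d, \sum_(j < a) mu (tau j).+1 * w j = \sum_(i < n) lam i.+1 * d i /\
    capped_weights (fun=> 1) w m /\
    capped_weights (fun i => if ex i then 0 else 1 - `|v i.+1 k 0| ^+ 2 / U) d m.
Proof.
move=> tau_inj exf le_bma U U_neq0.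
have UV : \sum_(i | ~~ ex i) `|V k i| ^+ 2 = U by apply: eq_bigr => i _; rewrite mxE.
have Yk j : rowsub tau W j k = 0 by rewrite mxE W_k.
have UV_neq0 : \sum_(i | ~~ ex i) `|V k i| ^+ 2 != 0 by rewrite UV.
have [w [d [tr [w_capped [d_cap d_sum]]]]] := unitary_trace_weights V_unitary
  A_spectral (rowsub_unitarymx tau_inj W_unitary) (rowsub_conj_diag tau_inj W_diag)
  Yk exf le_bma UV_neq0.
exists w, d; split; last by split=> //; split=> // i; have := d_cap i; rewrite UV mxE.
have -> : \sum_(i < n) lam i.+1 * d i = \sum_i (\row_i lam i.+1) 0 i * d i.
  by apply: eq_bigr => i _; rewrite mxE.
by rewrite -tr; apply: eq_bigr => j _; rewrite !mxE.
Qed.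

Lemma interlacing_lower l r : (1 <= l)%N -> (l <= r)%N -> (r <= n.-1)%N ->
  \sum_(1 <= i < r.+2) `|v i k 0| ^+ 2 != 0 ->
  \sum_(l <= j < r.+1) lam j.+1
    + \sum_(l <= j < r.+1)
        (`|v j.+1 k 0| ^+ 2 / \sum_(1 <= i < r.+2) `|v i k 0| ^+ 2)
          * (lam l - lam j.+1)
  <= \sum_(l <= j < r.+1) mu j.
Proof.
move=> l_ge1 le_lr le_rn L_neq0; set L := \sum_(1 <= i < r.+2) _ in L_neq0 *.
(* Rows of W for mu_l, ..., mu_(n-1); excluded eigenvectors v_(r+2), ..., v_n. *)
have tau_lt (j : 'I_(n.-1 - l.-1)) : (j + l.-1 < n.-1)%N by have := ltn_ord j; lia.
have f_lt (t : 'I_(n - r.+1)) : (t + r.+1 < n)%N by have := ltn_ord t; lia.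
pose ex := [pred i : 'I_n | r < i]%N.
have exf i : ex i -> exists t, i = Ordinal (f_lt t).
  rewrite inE => lt_ri; have t_lt : (i - r.+1 < n - r.+1)%N by have := ltn_ord i; lia.
  by exists (Ordinal t_lt); apply: val_inj => /=; lia.
have LU : L = \sum_(i | ~~ ex i) `|v i.+1 k 0| ^+ 2.
  rewrite /L (@big_nat_ord_window _ _ _ _ 1 n) //; last by lia.
  by apply: eq_big => [i | i _]; [rewrite inE; have := ltn_ord i; lia | rewrite addn1].
have tau_inj : injective (fun j => Ordinal (tau_lt j)).
  by move=> i j /(congr1 val) /= /eqP; rewrite eqn_add2r => /eqP /val_inj.
have le_bma : (n - r.+1 + (r.+1 - l) <= n.-1 - l.-1)%N by lia.
have U_neq0 : \sum_(i | ~~ ex i) `|v i.+1 k 0| ^+ 2 != 0 by rewrite -LU.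
have [w [d [tr [w_capped d_capped]]]] := interlacing_weights tau_inj exf le_bma U_neq0.
have d_ex := capped_weights_eq0 d_capped.
rewrite -LU in d_capped.
apply: (@le_trans _ _ (\sum_(i < n) lam i.+1 * d i)).
  rewrite -big_split /= (@big_nat_ord_window _ _ _ _ 0 n) //; last by lia.
  rewrite (eq_bigr (fun i : 'I_n => (lam i.+1 - lam l)
      * (if ex i then 0 else 1 - `|v i.+1 k 0| ^+ 2 / L) + lam l)); last first.
    move=> i /andP [_ lt_ir]; have -> : ex i = false by rewrite inE; lia.
    by rewrite addn0; ring.
  apply: capped_weights_sum_ge d_capped _ _ _.
  - by apply: card_ord_window; lia.
  - by move=> i /andP [le_li lt_ir]; apply: lam_sorted; lia.
  move=> i P_i dNi; have : ~~ ex i by apply: contra dNi => /d_ex ->.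
  by rewrite inE => exNi; apply: lam_sorted; lia.
rewrite -tr (@big_nat_ord_window _ _ _ _ l (n.-1 - l.-1)) //; last by lia.
rewrite [leRHS](eq_bigr (fun j => (mu (Ordinal (tau_lt j)).+1 - mu r) * 1 + mu r)).
  apply: capped_weights_sum_le w_capped _ _ _.
  - by apply: card_ord_window; lia.
  - by move=> j P_j; apply: mu_sorted => /=; lia.
  by move=> j P_j _; apply: mu_sorted => /=; have := ltn_ord j; lia.
by move=> j _; rewrite mulr1 subrK /=; congr mu; lia.
Qed.

Lemma interlacing_upper l r : (1 <= l)%N -> (l <= r)%N -> (r <= n.-1)%N ->
  \sum_(l <= i < n.+1) `|v i k 0| ^+ 2 != 0 ->
  \sum_(l <= j < r.+1) mu j
  <= \sum_(l <= j < r.+1) lam j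
    - \sum_(l <= j < r.+1)
        (`|v j k 0| ^+ 2 / \sum_(l <= i < n.+1) `|v i k 0| ^+ 2)
          * (lam j - lam r.+1).
Proof.
move=> l_ge1 le_lr le_rn U_neq0; set U := \sum_(l <= i < n.+1) _ in U_neq0 *.
(* Rows of W for mu_1, ..., mu_r; excluded eigenvectors v_1, ..., v_(l-1). *)
have f_le : (l.-1 <= n)%N by lia.
pose ex := [pred i : 'I_n | i < l.-1]%N.
have exf i : ex i -> exists t, i = widen_ord f_le t.
  by rewrite inE => lt_il; exists (Ordinal lt_il); apply: val_inj.
have UE : U = \sum_(i | ~~ ex i) `|v i.+1 k 0| ^+ 2.
  rewrite /U (@big_nat_ord_window _ _ _ _ 1 n) //; last by lia.
  by apply: eq_big => [i | i _]; [rewrite inE; have := ltn_ord i; lia | rewrite addn1].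
have tau_inj : injective (widen_ord le_rn) by move=> i j /(congr1 val) /= /val_inj.
have le_bma : (l.-1 + (r.+1 - l) <= r)%N by lia.
have UE_neq0 : \sum_(i | ~~ ex i) `|v i.+1 k 0| ^+ 2 != 0 by rewrite -UE.
have [w [d [tr [w_capped d_capped]]]] := interlacing_weights tau_inj exf le_bma UE_neq0.
have d_ex := capped_weights_eq0 d_capped.
rewrite -UE in d_capped.
apply: (@le_trans _ _ (\sum_(i < n) lam i.+1 * d i)).
  rewrite -tr (@big_nat_ord_window _ _ _ _ 1 r) //; last by lia.
  rewrite [leLHS](eq_bigr (fun j => (mu (widen_ord le_rn j).+1 - mu l) * 1 + mu l)).
    apply: capped_weights_sum_ge w_capped _ _ _.
    - by apply: card_ord_window; lia.
    - by move=> j P_j; apply: mu_sorted => /=; lia.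
    by move=> j P_j _; apply: mu_sorted => /=; have := ltn_ord j; lia.
  by move=> j _; rewrite mulr1 subrK addn1.
rewrite -sumrB (@big_nat_ord_window _ _ _ _ 1 n) //; last by lia.
rewrite [leRHS](eq_bigr (fun i : 'I_n => (lam i.+1 - lam r.+1)
    * (if ex i then 0 else 1 - `|v i.+1 k 0| ^+ 2 / U) + lam r.+1)); last first.
  move=> i /andP [le_li _]; have -> : ex i = false by rewrite inE; lia.
  by rewrite addn1; ring.
apply: capped_weights_sum_le d_capped _ _ _.
- by apply: card_ord_window; lia.
- by move=> i P_i; apply: lam_sorted; lia.
move=> i P_i dNi; have : ~~ ex i by apply: contra dNi => /d_ex ->.
by rewrite inE => exNi; apply: lam_sorted; have := ltn_ord i; lia.
Qed.
End Interlacing.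

Theorem theorem3p3 (C : numClosedFieldType) (n : nat) (A : 'M[C]_n)
  (lam : nat -> C) (v : nat -> 'cV[C]_n) (k : 'I_n) (mu : nat -> C)
  (l r : nat) :
  (2 <= n)%N ->
  hermitian_mx A ->
  (forall i, (1 <= i < n)%N -> lam i.+1 <= lam i) ->
  (forall i, (1 <= i <= n)%N -> A *m v i = lam i *: v i) ->
  (forall i j, (1 <= i <= n)%N -> (1 <= j <= n)%N ->
     \sum_(p < n) (v i p 0)^* * v j p 0 = (i == j)%:R) ->
  char_poly (principal_del k A) = \prod_(1 <= j < n) ('X - (mu j)%:P) ->
  (forall j, (1 <= j < n.-1)%N -> mu j.+1 <= mu j) ->
  (1 <= l)%N -> (l <= r)%N -> (r <= n.-1)%N ->
  \sum_(l <= i < n.+1) `|v i k 0| ^+ 2 != 0 ->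
  \sum_(1 <= i < r.+2) `|v i k 0| ^+ 2 != 0 ->
  \sum_(l <= j < r.+1) lam j.+1
    + \sum_(l <= j < r.+1)
        (`|v j.+1 k 0| ^+ 2 / \sum_(1 <= i < r.+2) `|v i k 0| ^+ 2)
          * (lam l - lam j.+1)
  <= \sum_(l <= j < r.+1) mu j
  /\
  \sum_(l <= j < r.+1) mu j
  <= \sum_(l <= j < r.+1) lam j
    - \sum_(l <= j < r.+1)
        (`|v j k 0| ^+ 2 / \sum_(l <= i < n.+1) `|v i k 0| ^+ 2)
          * (lam j - lam r.+1).
Proof.
move=> _ A_herm lam_step Av v_orth A_char mu_step l_ge1 le_lr le_rn U_neq0 L_neq0.
pose V : 'M[C]_n := \matrix_(p, i) v i.+1 p 0.
have V_unitary : V \is unitarymx.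
  apply/unitarymxP/mulmx1C/matrixP => i j; rewrite !mxE.
  have := v_orth i.+1 j.+1 (ltn_ord i) (ltn_ord j); rewrite eqSS => <-.
  by apply: eq_bigr => p _; rewrite !mxE.
have AV : A *m V = V *m diag_mx (\row_i lam i.+1).
  apply/matrixP => p i; rewrite mul_mx_diag !mxE.
  have /matrixP /(_ p 0) := Av i.+1 (ltn_ord i); rewrite !mxE mulrC => <-.
  by apply: eq_bigr => q _; rewrite !mxE.
have A_spectral : A = V *m diag_mx (\row_i lam i.+1) *m V^t* by rewrite -AV mulmxtVK.
have mu_char : char_poly (principal_del k A) =
    \prod_j ('X - ((\row_(j < n.-1) mu j.+1) 0 j)%:P).
  by rewrite A_char big_add1 big_mkord; apply: eq_bigr => j _; rewrite mxE.
have [W [W_unitary W_diag W_k]] := principal_del_unitary_diag A_herm mu_char.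
have lam_sorted := sorted_le lam_step; have mu_sorted := sorted_le mu_step.
split.
- exact (interlacing_lower V_unitary A_spectral W_unitary W_diag W_k lam_sorted mu_sorted
    l_ge1 le_lr le_rn L_neq0).
- exact (interlacing_upper V_unitary A_spectral W_unitary W_diag W_k lam_sorted mu_sorted
    l_ge1 le_lr le_rn U_neq0).
Qed.
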